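(* Let $h,m$ be positive integers with $h=1$ or $\omega(m)=1$, and let $c$ be a positive integer such that no $\mathrm{CC}^h[m]$-circuit computes the $n$-ary conjunction $\mathrm{AND}_n$ for any $n>c$. Let $L\subseteq\{0,1\}^*$ be a language recognizable by $\mathrm{CC}^h[m]$-circuits (i.e. for every $n$ some $\mathrm{CC}^h[m]$-circuit with $n$ inputs outputs $1$ exactly on the words of $L$ of length $n$). Then for every $n$ the number of words of length $n$ in $L$ is either $0$ or at least $2^{n-c}$.
   Context: For an integer $m\ge 1$ and $A\subseteq\{0,\dots,m-1\}$, a gate $\mathrm{MOD}_m^A$ takes finitely many Boolean inputs (counted with multiplicity) and outputs $1$ if their sum modulo $m$ lies in $A$, and $0$ otherwise. A $\mathrm{CC}^h[m]$-circuit is a depth-$h$ Boolean circuit all of whose gates are of the form $\mathrm{MOD}_m^A$ ($A$ may vary between gates), with Boolean variable inputs (constants allowed) and multiple wires allowed. $\omega(m)$ is the number of distinct prime divisors of $m$. *)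

From Stdlib Require List.
From mathcomp Require Import all_boot.
Set Implicit Arguments. Unset Strict Implicit. Unset Printing Implicit Defensive.

(* Circuits are unfolded into formulas (trees), which
   compute exactly the same functions as DAGs of the same depth; multiple
   wires = repetitions in the list of gate inputs. *)

Definition modgate (m : nat) (A : {set 'I_m}) (bs : seq bool) : bool :=
  [exists i in A, nat_of_ord i == (\sum_(b <- bs) (b : nat)) %% m].

Fixpoint CC (m n h : nat) (f : n.-tuple bool -> bool) {struct h} : Prop :=
  match h with
  | 0 => (exists i : 'I_n, forall x, f x = tnth x i)
         \/ (exists b : bool, forall x, f x = b)
  | h'.+1 =>
      @CC m n h' f \/
      exists (A : {set 'I_m}) (gs : seq (n.-tuple bool -> bool)),
        (forall g, List.In g gs -> @CC m n h' g) /\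
        (forall x, f x = modgate A [seq g x | g <- gs])
  end.

Definition ANDn (n : nat) (x : n.-tuple bool) : bool := all id x.

Definition omega (m : nat) : nat := size (primes m).

Definition CC_recognizes (m h : nat) (L : pred (seq bool)) : Prop :=
  forall n, exists f : n.-tuple bool -> bool,
    @CC m n h f /\ forall w : n.-tuple bool, f w = L w.

From mathcomp Require Import all_boot zify.
Set Implicit Arguments. Unset Strict Implicit. Unset Printing Implicit Defensive.

(* If L_n is nonempty but has fewer than 2^(n-c) words, repeatedly halving
   along coordinates isolates a word w of L_n in a subcube of dimension d > c:
   w is the only word of L_n in that subcube.  Substituting into a circuit for
   L_n the constants of w outside the subcube and literals of d fresh variables
   inside it gives a CC^h[m]-circuit for AND_d, negated literals being absorbed
   by the MOD_m gates reading them (~~ b = 1 + (m - 1) b mod m). *)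

Lemma CC_ext m n h (f g : n.-tuple bool -> bool) :
  f =1 g -> CC m h f -> CC m h g.
Proof.
elim: h f g => [|h IH] f g fg /=.
  case=> [[i fi]|[b fb]]; [left; exists i | right; exists b] => x;
  by rewrite -fg.
case=> [Cf|[A [gs [Cgs fA]]]]; first by left; exact: IH Cf.
by right; exists A, gs; split=> // x; rewrite -fg.
Qed.

Lemma CC0_CC m n h (f : n.-tuple bool -> bool) : CC m 0 f -> CC m h f.
Proof. by move=> Cf; elim: h => [|h IH] //=; left. Qed.

Lemma In_nseq T k (x y : T) : List.In y (nseq k x) -> y = x.
Proof. by elim: k => [|k IH] //= [->|/IH]. Qed.

Lemma sum_nseq k (b : bool) : \sum_(x <- nseq k b) (x : nat) = k * b.
Proof. by elim: k => [|k IH]; rewrite ?big_nil // big_cons IH mulSn. Qed.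

Lemma negb_modn m (b : bool) : 0 < m -> ~~ b = 1 + m.-1 * b %[mod m].
Proof.
move=> m_gt0; case: b; rewrite /= ?muln0 ?addn0 //.
by rewrite muln1 add1n prednK // modnn mod0n.
Qed.

Definition literal_substitution n d (pi : d.-tuple bool -> n.-tuple bool) :=
  forall i : 'I_n,
    (exists b, forall y, tnth (pi y) i = b) \/
    (exists j, forall y, tnth (pi y) i = tnth y j) \/
    (exists j, forall y, tnth (pi y) i = ~~ tnth y j).

Section LiteralSubstitution.
Variables (m n d : nat) (pi : d.-tuple bool -> n.-tuple bool).
Hypotheses (m_gt0 : 0 < m) (pi_literal : literal_substitution pi).

Lemma CC_inputs_absorb_negations h (gs : seq (n.-tuple bool -> bool)) :
  (forall g, List.In g gs ->
     CC m h (g \o pi) \/ exists j, forall y, g (pi y) = ~~ tnth y j) ->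
  exists gs' : seq (d.-tuple bool -> bool),
    (forall g', List.In g' gs' -> CC m h g') /\
    forall y, \sum_(b <- [seq g (pi y) | g <- gs]) (b : nat)
              = \sum_(b <- [seq g' y | g' <- gs']) (b : nat) %[mod m].
Proof.
elim: gs => [|g gs IH] gs_ok; first by exists [::].
have [|gs' [Cgs' sum_gs']] := IH; first by move=> g' g'gs; apply: gs_ok; right.
case: (gs_ok g (or_introl erefl)) => [Cg|[j gj]].
  exists (g \o pi :: gs'); split; first by move=> g' /= [<-|/Cgs'].
  by move=> y; rewrite /= !big_cons -modnDmr sum_gs' modnDmr.
exists ((fun=> true) :: nseq m.-1 (fun y => tnth y j) ++ gs'); split.
  move=> g' /= [<- | g'in]; first by apply: CC0_CC; right; exists true.
  case: (List.in_app_or _ _ _ g'in) => [g'j | /Cgs' //]; rewrite (In_nseq g'j).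
  by apply: CC0_CC; left; exists j.
move=> y; rewrite /= !big_cons map_cat map_nseq big_cat sum_nseq /=.
rewrite -modnDmr sum_gs' modnDmr gj addnA.
by rewrite -[RHS]modnDml -negb_modn // modnDml.
Qed.

Lemma CC_comp_literal h (g : n.-tuple bool -> bool) : CC m h g ->
  CC m h (g \o pi) \/ exists j, forall y, g (pi y) = ~~ tnth y j.
Proof.
elim: h g => [|h IH] g /=.
  case=> [[i gi]|[b gb]]; last by left; right; exists b => y; rewrite /= gb.
  case: (pi_literal i) => [[b pib]|[[j pij]|[j pij]]].
  - by left; right; exists b => y; rewrite /= gi pib.
  - by left; left; exists j => y; rewrite /= gi pij.
  - by right; exists j => y; rewrite gi pij.
case=> [Cg|[A [gs [Cgs gA]]]].
  by case: (IH g Cg) => ?; [left; left | right].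
have [|gs' [Cgs' sum_gs']] := @CC_inputs_absorb_negations h gs.
  by move=> g' /Cgs /IH.
left; right; exists A, gs'; split=> // y.
by rewrite /= gA /modgate sum_gs'.
Qed.

End LiteralSubstitution.

Definition agree_off n (D : {set 'I_n}) (x y : n.-tuple bool) :=
  forall i, i \notin D -> tnth x i = tnth y i.

Definition slice n (S : {set n.-tuple bool}) (i : 'I_n) (b : bool) :=
  [set x in S | tnth x i == b].

Lemma card_slices n (S : {set n.-tuple bool}) i :
  #|slice S i true| + #|slice S i false| = #|S|.
Proof.
rewrite -(cardsID [set x | tnth x i] S); congr (_ + _); apply: eq_card => x;
  by rewrite !inE; case: (tnth x i); rewrite ?andbT ?andbF.
Qed.

Lemma nonempty_small_slice n (S : {set n.-tuple bool}) i : S != set0 ->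
  exists b, slice S i b != set0 /\
            (slice S i b = S \/ 2 * #|slice S i b| <= #|S|).
Proof.
rewrite -!card_gt0 => S_gt0; have cardS := card_slices S i.
have full b : #|slice S i b| = #|S| -> slice S i b = S.
  move=> cardSb; apply/eqP; rewrite eqEcard cardSb leqnn andbT.
  by apply/subsetP => x; rewrite inE => /andP[].
case: (posnP #|slice S i true|) => [St0|St_gt0].
  by exists false; rewrite -card_gt0; split; [lia | left; apply: full; lia].
case: (posnP #|slice S i false|) => [Sf0|Sf_gt0].
  by exists true; rewrite -card_gt0; split; [lia | left; apply: full; lia].
have [le_tf|lt_ft] := leqP #|slice S i true| #|slice S i false|;
  [exists true | exists false]; rewrite -card_gt0; split; try right; lia.
Qed.

Lemma isolated_in_subcube n (U : {set 'I_n}) (S : {set n.-tuple bool}) :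
  S != set0 -> {in S &, forall x y, agree_off U x y} ->
  exists w (D : {set 'I_n}), [/\ w \in S, D \subset U,
    {in S, forall x, agree_off D x w -> x = w} & 2 ^ #|U| <= 2 ^ #|D| * #|S|].
Proof.
move Ek: #|U| => k; elim: k U S Ek => [|k IH] U S cardU S_n0 agreeS.
  have [w wS] := set0Pn _ S_n0.
  exists w, set0; split; rewrite ?sub0set ?cards0 ?mul1n ?card_gt0 //.
  move=> x xS _; apply: eq_from_tnth => i.
  by apply: agreeS; rewrite // (cards0_eq cardU) inE.
have [i iU] : exists i, i \in U by apply/set0Pn; rewrite -card_gt0 cardU.
have cardUi : #|U :\ i| = k by move: cardU; rewrite (cardsD1 i) iU add1n => -[].
have [b [Sb_n0 Sb_small]] := nonempty_small_slice i S_n0.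
have agreeSb : {in slice S i b &, forall x y, agree_off (U :\ i) x y}.
  move=> x y; rewrite !inE => /andP[xS /eqP xi] /andP[yS /eqP yi] j.
  rewrite !inE negb_and negbK => /orP[/eqP-> | jU]; first by rewrite xi yi.
  exact: agreeS.
have [w [D [wSb DUi isoD cardD]]] := IH _ _ cardUi Sb_n0 agreeSb.
have /andP[wS /eqP wi] : (w \in S) && (tnth w i == b) by move: wSb; rewrite inE.
have DU : D \subset U by apply: subset_trans DUi (subsetDl _ _).
have iD : i \notin D by apply/negP => /(subsetP DUi); rewrite !inE eqxx.
case: Sb_small => [SbS | half_S].
  exists w, (i |: D); split => //.
  - by rewrite subUset sub1set iU.
  - move=> x xS x_w; apply: isoD; first by rewrite SbS.
    move=> j jD; have [->|ji] := eqVneq j i.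
      by move: xS; rewrite -SbS inE wi => /andP[_ /eqP].
    by apply: x_w; rewrite !inE negb_or ji.
  - by rewrite expnS cardsU1 iD expnS -mulnA leq_mul2l -SbS cardD orbT.
exists w, D; split => //.
  move=> x xS x_w; apply: isoD => //.
  by rewrite inE xS (x_w i iD) wi eqxx.
rewrite expnS (leq_trans (leq_mul (leqnn 2) cardD)) //.
by rewrite mulnCA leq_mul2l half_S orbT.
Qed.

Section SubcubeMap.
Variables (n : nat) (w : n.-tuple bool) (D : {set 'I_n}) (i0 : 'I_n).
Hypothesis i0D : i0 \in D.

(* The literal signs are those of [w], so the all-true point is sent to [w]. *)
Definition subcube_map (y : #|D|.-tuple bool) : n.-tuple bool :=
  [tuple if i \in D then tnth y (enum_rank_in i0D i) == tnth w i else tnth w i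
  | i < n].

Lemma subcube_map_literal : literal_substitution subcube_map.
Proof.
move=> i; rewrite /subcube_map; case: (boolP (i \in D)) => iD; last first.
  by left; exists (tnth w i) => y; rewrite tnth_mktuple (negbTE iD).
right; case: (boolP (tnth w i)) => wi; [left | right];
  exists (enum_rank_in i0D i) => y; rewrite tnth_mktuple iD;
  by case: (tnth w i) wi; case: (tnth y _).
Qed.

Lemma agree_off_subcube_map y : agree_off D (subcube_map y) w.
Proof. by move=> i iD; rewrite tnth_mktuple (negbTE iD). Qed.

Lemma subcube_map_eq y : (subcube_map y == w) = ANDn y.
Proof.
apply/eqP/allP => [y_w _ /tnthP[j ->] | y_true].
  have := congr1 (fun t => tnth t (enum_val j)) y_w.
  rewrite tnth_mktuple (enum_valP j) enum_valK_in.
  by case: (tnth y j); case: (tnth w _).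
apply: eq_from_tnth => i; rewrite tnth_mktuple; case: ifP => // _.
by rewrite (y_true _ (mem_tnth _ _)); case: (tnth w i).
Qed.

End SubcubeMap.

Lemma CC_AND_of_isolated_point m h n (f : n.-tuple bool -> bool)
    (S : {set n.-tuple bool}) w (D : {set 'I_n}) :
  0 < m -> 0 < #|D| -> CC m h f -> (forall x, f x = (x \in S)) -> w \in S ->
  {in S, forall x, agree_off D x w -> x = w} -> CC m h (@ANDn #|D|).
Proof.
move=> m_gt0 /card_gt0P[i0 i0D] Cf f_S wS isoD.
have f_map y : f (subcube_map w i0D y) = ANDn y.
  rewrite f_S -(subcube_map_eq w i0D); apply/idP/eqP => [xS | ->//].
  exact: isoD xS (agree_off_subcube_map _ _ _).
have [Cmap | [j negj]] := CC_comp_literal m_gt0 (subcube_map_literal w i0D) Cf.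
  exact: CC_ext Cmap.
have := negj [tuple of nseq #|D| true].
by rewrite f_map tnth_nseq /ANDn all_nseq orbT.
Qed.

Lemma exp_card_bound n d c s : 2 ^ n <= 2 ^ d * s -> s < 2 ^ (n - c) -> c < d.
Proof.
have [n_le_c | c_lt_n] := leqP n c.
  rewrite (eqP (_ : n - c == 0)) ?subn_eq0 // ltnS leqn0 => le_n /eqP s0.
  by move: le_n; rewrite s0 muln0 leqNgt expn_gt0.
move=> le_n lt_s; have : 2 ^ n < 2 ^ (d + (n - c)).
  by rewrite expnD (leq_ltn_trans le_n) // ltn_pmul2l ?expn_gt0.
by rewrite ltn_exp2l //; lia.
Qed.

Theorem corollary2p5 (h m c : nat) (L : pred (seq bool)) :
  0 < h -> 0 < m -> (h = 1 \/ omega m = 1) -> 0 < c ->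
  (forall n, c < n -> ~ @CC m n h (@ANDn n)) ->
  CC_recognizes m h L ->
  forall n, #|[set w : n.-tuple bool | L w]| = 0
            \/ 2 ^ (n - c) <= #|[set w : n.-tuple bool | L w]|.
Proof.
move=> _ m_gt0 _ _ noAND recL n.
set S := [set w : n.-tuple bool | L w].
have [|S_gt0] := posnP #|S|; [by left | right].
rewrite leqNgt; apply/negP => S_small.
have [||w [D [wS _ isoD cardD]]] := @isolated_in_subcube n setT S.
- by rewrite -card_gt0.
- by move=> x y _ _ i; rewrite inE.
rewrite cardsT card_ord in cardD.
have c_lt_D := exp_card_bound cardD S_small.
have [f [Cf fL]] := recL n.
apply: (noAND _ c_lt_D); apply: CC_AND_of_isolated_point m_gt0 _ Cf _ wS isoD.
- exact: leq_ltn_trans c_lt_D.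
- by move=> x; rewrite fL inE.
Qed.
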